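(* Let $n\ge 3$ and let $L^B$ be a blow-up of the Boolean lattice $L\cong\mathbf{2}^n$. Then: (1) $L^B$ and its dual lattice $(L^B)^{\partial}$ are both pseudocomplemented; (2) $[L^B]\cong[(L^B)^{\partial}]\cong L\cong \mathbf{2}^n$; (3) for $a,b\in L^B$, $a^{\perp}=b^{\perp}$ if and only if $a^*=b^*$, where $a^*,b^*$ denote the pseudocomplements of $a,b$ in $L^B$.
   Context: Blow-up: Let $L\cong\mathbf{2}^n$ be a Boolean lattice with atoms $q_1,\dots,q_n$. A blow-up $L^B$ of $L$ is obtained by replacing each element $a\in L\setminus\{0,1\}$ by a finite chain $C_a$: $a=a^{1}\lessdot a^{2}\lessdot\cdots\lessdot a^{k_a}$ ($k_a\ge1$), keeping $0$ and $1$ as single elements; the order is: elements of the same chain $C_a$ are ordered along the chain, and for $u\in C_a$, $v\in C_b$ with $a\neq b$ (where $C_0=\{0\}$, $C_1=\{1\}$), $u\le v$ iff $a<b$ in $L$. In a poset $P$ with $0$, $a^{\perp}=\{b\in P:\{a,b\}^{\ell}=\{0\}\}$, where $\{a,b\}^\ell$ is the set of common lower bounds. The pseudocomplement $a^*$ of $a$ is the (unique if it exists) element with $\{a,a^*\}^{\ell}=\{0\}$ and such that $\{a,x\}^{\ell}=\{0\}$ implies $x\le a^*$; $P$ is pseudocomplemented if every element has one. For a lattice $M$ with $0$, $x\sim y$ iff $x^{\perp}=y^{\perp}$; $[x]$ is the class of $x$, and $[M]=\{[x]:x\in M\}$ is ordered by $[a]\le[b]$ iff $b^{\perp}\subseteq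 a^{\perp}$. *)

From mathcomp Require Import all_boot.
Set Implicit Arguments. Unset Strict Implicit. Unset Printing Implicit Defensive.

Definition perp (T : Type) (le : T -> T -> Prop) (z : T) (a : T) : T -> Prop :=
  fun b => forall c, le c a -> le c b -> c = z.

Definition is_pcompl (T : Type) (le : T -> T -> Prop) (z : T) (a p : T) : Prop :=
  perp le z a p /\ (forall x, perp le z a x -> le x p).

Definition pseudocomplemented (T : Type) (le : T -> T -> Prop) (z : T) : Prop :=
  forall a, exists p, is_pcompl le z a p.

(* [M] is order-isomorphic to the Boolean lattice 2^n = ({set 'I_n}, \subset):
   there is a surjection f : T -> {set 'I_n} with
   x ~ y (x^perp = y^perp) iff f x = f y, and [x] <= [y] (y^perp ⊆ x^perp)
   iff f x \subset f y.  This is exactly an order isomorphism [M] ≅ 2^n. *)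
Definition classes_iso_bool (T : Type) (le : T -> T -> Prop) (z : T) (n : nat) : Prop :=
  exists f : T -> {set 'I_n},
    (forall A : {set 'I_n}, exists x, f x = A) /\
    (forall x y, (forall w, perp le z x w <-> perp le z y w) <-> f x = f y) /\
    (forall x y, (forall w, perp le z y w -> perp le z x w) <-> f x \subset f y).

(* chain length of the element a; 0 and 1 are not blown up *)
Definition bkk (n : nat) (k : {set 'I_n} -> nat) (a : {set 'I_n}) : nat :=
  if (a == set0) || (a == setT) then 1 else k a.

(* element (a, i) is a^{i+1} in the chain C_a *)
Definition blowup (n : nat) (k : {set 'I_n} -> nat) : Type :=
  {p : {set 'I_n} * nat | p.2 < bkk k p.1}.

Definition bu_le (n : nat) (k : {set 'I_n} -> nat) (x y : blowup k) : Prop :=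
  let a := (val x).1 in let i := (val x).2 in
  let b := (val y).1 in let j := (val y).2 in
  ((a == b) && (i <= j)) || (a \proper b).

Definition bu_dual_le (n : nat) (k : {set 'I_n} -> nat) (x y : blowup k) : Prop :=
  bu_le y x.

Lemma bu_bot_proof (n : nat) (k : {set 'I_n} -> nat) : (set0 : {set 'I_n}, 0).2 < bkk k (set0 : {set 'I_n}, 0).1.
Proof. by rewrite /bkk eqxx. Qed.

Lemma bu_top_proof (n : nat) (k : {set 'I_n} -> nat) : (setT : {set 'I_n}, 0).2 < bkk k (setT : {set 'I_n}, 0).1.
Proof. by rewrite /bkk eqxx orbT. Qed.

Definition bu_bot (n : nat) (k : {set 'I_n} -> nat) : blowup k :=
  exist _ (set0 : {set 'I_n}, 0) (bu_bot_proof k).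

Definition bu_top (n : nat) (k : {set 'I_n} -> nat) : blowup k :=
  exist _ (setT : {set 'I_n}, 0) (bu_top_proof k).

From mathcomp Require Import all_boot.
Set Implicit Arguments. Unset Strict Implicit. Unset Printing Implicit Defensive.

(* Every element x of L^B lies on the chain over some base set a = base x in
   2^n.  Two elements have only 0 as common lower bound iff their bases are
   disjoint, since the bottom of the chain over a ∩ b lies below both.  Hence
   x^perp depends only on base x and shrinks as base x grows, so [L^B] ≅ 2^n,
   and the pseudocomplement of x is the top of the chain over the complement
   of base x.  The dual lattice is handled in the same way with unions and
   the bottoms of chains. *)

Section Perp.

Variables (T : Type) (le : T -> T -> Prop) (z : T).

Lemma is_pcompl_perp_eq a b p :
  (forall w, perp le z a w <-> perp le z b w) ->
  is_pcompl le z a p -> is_pcompl le z b p.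
Proof.
move=> eq_ab [ap ap_max]; split; first exact/eq_ab.
by move=> x /eq_ab; apply: ap_max.
Qed.

Lemma pcompl_unique (le_anti : forall x y, le x y -> le y x -> x = y) a p q :
  is_pcompl le z a p -> is_pcompl le z a q -> p = q.
Proof. by move=> [ap p_max] [aq q_max]; apply: le_anti; [apply: q_max | apply: p_max]. Qed.

Variables (n : nat) (f : T -> {set 'I_n}).
Hypothesis perp_subE :
  forall x y, (forall w, perp le z y w -> perp le z x w) <-> f x \subset f y.

Lemma perp_equivE x y :
  (forall w, perp le z x w <-> perp le z y w) <-> f x = f y.
Proof.
split=> [eq_xy | fxy w].
  apply/eqP; rewrite eqEsubset; apply/andP.
  by split; [apply/(perp_subE x y) | apply/(perp_subE y x)] => w /eq_xy.
by split; [apply: (proj2 (perp_subE y x)) | apply: (proj2 (perp_subE x y))]; rewrite fxy.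
Qed.

Lemma classes_iso_bool_of_subset :
  (forall A, exists x, f x = A) -> classes_iso_bool le z n.
Proof. by move=> f_surj; exists f; split; [|split] => // x y; apply: perp_equivE. Qed.

End Perp.

Section Blowup.

Variables (n : nat) (k : {set 'I_n} -> nat).
Hypothesis k_gt0 : forall a : {set 'I_n}, a != set0 -> a != setT -> 0 < k a.

Local Notation L := (blowup k).
Local Notation perpB := (perp (@bu_le n k) (bu_bot k)).
Local Notation perpD := (perp (@bu_dual_le n k) (bu_top k)).

Definition base (x : L) : {set 'I_n} := (val x).1.
Definition height (x : L) : nat := (val x).2.

Lemma bu_leE (x y : L) :
  bu_le x y = ((base x == base y) && (height x <= height y)) || (base x \proper base y).
Proof. by []. Qed.

Lemma blowup_eq (x y : L) : base x = base y -> height x = height y -> x = y.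
Proof.
case: x y => [[a i] ?] [[b j] ?]; rewrite /base /height /= => ab ij.
by apply: val_inj; rewrite /= ab ij.
Qed.

Lemma bkk_gt0 a : 0 < bkk k a.
Proof.
rewrite /bkk; have [//|a0] := eqVneq a set0; have [//|aT] := eqVneq a setT.
exact: k_gt0.
Qed.

Lemma height_lt (x : L) : height x < bkk k (base x).
Proof. exact: valP x. Qed.

Definition chain_bot a : L := exist _ (a, 0) (bkk_gt0 a).

Lemma chain_top_subproof a : (a, (bkk k a).-1).2 < bkk k (a, (bkk k a).-1).1.
Proof. by rewrite /= ltn_predL bkk_gt0. Qed.

Definition chain_top a : L := exist _ (a, (bkk k a).-1) (chain_top_subproof a).

Lemma bu_le_base (x y : L) : bu_le x y -> base x \subset base y.
Proof. by rewrite bu_leE => /orP[/andP[/eqP -> _] | /proper_sub]. Qed.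

Lemma bu_le_of_base (x y : L) :
  base x \subset base y -> (base x = base y -> height x <= height y) -> bu_le x y.
Proof.
move=> sxy hxy; rewrite bu_leE; have [exy | nxy] := eqVneq (base x) (base y).
  by rewrite hxy.
by rewrite properEneq nxy sxy orbT.
Qed.

Lemma bu_le_anti (x y : L) : bu_le x y -> bu_le y x -> x = y.
Proof.
move=> lxy lyx; have exy : base x = base y.
  by apply/eqP; rewrite eqEsubset !bu_le_base.
move: lxy lyx; rewrite !bu_leE exy eqxx properxx !orbF /= => hxy hyx.
by apply: blowup_eq => //; apply/eqP; rewrite eqn_leq hxy hyx.
Qed.

Lemma chain_bot_le (a : {set 'I_n}) (x : L) : a \subset base x -> bu_le (chain_bot a) x.
Proof. by move=> sax; apply: bu_le_of_base. Qed.

Lemma le_chain_top (a : {set 'I_n}) (x : L) : base x \subset a -> bu_le x (chain_top a).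
Proof.
move=> sxa; apply: bu_le_of_base => // exa.
by have := height_lt x; rewrite exa /height /=; case: (bkk k a).
Qed.

Lemma base_eq0 (x : L) : base x = set0 -> x = bu_bot k.
Proof.
move=> x0; apply: blowup_eq => //.
by have := height_lt x; rewrite x0 /bkk eqxx /height /=; case: (val x).2.
Qed.

Lemma base_eqT (x : L) : base x = setT -> x = bu_top k.
Proof.
move=> xT; apply: blowup_eq => //.
by have := height_lt x; rewrite xT /bkk eqxx orbT /height /=; case: (val x).2.
Qed.

Lemma perpE (x y : L) : perpB x y <-> base y \subset ~: base x.
Proof.
split=> [xy | syx c cx cy].
  have /(congr1 base) := xy _ (chain_bot_le (subsetIl (base x) (base y)))
    (chain_bot_le (subsetIr _ _)).
  by rewrite subsets_disjoint setCK -setI_eq0 setIC => /eqP.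
apply: base_eq0; apply/eqP; rewrite -subset0 -(setICr (base x)) subsetI bu_le_base //=.
exact: subset_trans (bu_le_base cy) syx.
Qed.

Lemma perp_dualE (x y : L) : perpD x y <-> ~: base x \subset base y.
Proof.
split=> [xy | sxy c xc yc].
  have /(congr1 base) xyT := xy _ (le_chain_top (subsetUl (base x) (base y)))
    (le_chain_top (subsetUr _ _)).
  by rewrite subsets_disjoint -setI_eq0 -setCU -setCT; apply/eqP; congr (~: _).
apply: base_eqT; apply/eqP; rewrite eqEsubset subsetT -(setUCr (base x)) subUset.
by rewrite bu_le_base //= (subset_trans sxy) // bu_le_base.
Qed.

Lemma perp_subE (x y : L) : (forall w, perpB y w -> perpB x w) <-> base x \subset base y.
Proof.
split=> [sub | sxy w /perpE syw]; last by apply/perpE; rewrite (subset_trans syw) ?setCS.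
have /perpE : perpB x (chain_bot (~: base y)) by apply/sub/perpE.
by rewrite /= setCS.
Qed.

Lemma perp_dual_subE (x y : L) :
  (forall w, perpD y w -> perpD x w) <-> ~: base x \subset ~: base y.
Proof.
rewrite setCS; split=> [sub | syx w /perp_dualE syw].
  have /perp_dualE : perpD x (chain_bot (~: base y)) by apply/sub/perp_dualE.
  by rewrite /= setCS.
by apply/perp_dualE; rewrite (subset_trans _ syw) ?setCS.
Qed.

Lemma is_pcompl_chain_top (x : L) : is_pcompl (@bu_le n k) (bu_bot k) x (chain_top (~: base x)).
Proof. by split=> [|w /perpE]; [apply/perpE | apply: le_chain_top]. Qed.

Lemma is_pcompl_dual_chain_bot (x : L) :
  is_pcompl (@bu_dual_le n k) (bu_top k) x (chain_bot (~: base x)).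
Proof. by split=> [|w /perp_dualE]; [apply/perp_dualE | apply: chain_bot_le]. Qed.

Lemma pcompl_eq_perp_equiv (a b pa pb : L) :
  is_pcompl (@bu_le n k) (bu_bot k) a pa -> is_pcompl (@bu_le n k) (bu_bot k) b pb ->
  (forall w, perpB a w <-> perpB b w) <-> pa = pb.
Proof.
move=> apa bpb; split=> [ab | pab].
  apply: (pcompl_unique bu_le_anti apa).
  by apply: is_pcompl_perp_eq bpb => w; apply: iff_sym.
apply/(perp_equivE perp_subE a b); apply: setC_inj.
have := congr1 base pab.
by rewrite (pcompl_unique bu_le_anti apa (is_pcompl_chain_top a))
  (pcompl_unique bu_le_anti bpb (is_pcompl_chain_top b)).
Qed.

End Blowup.

Theorem mainTheorem3 (n : nat) (k : {set 'I_n} -> nat)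
  (hn : 3 <= n)
  (hk : forall a : {set 'I_n}, a != set0 -> a != setT -> 0 < k a) :
  (* (1) L^B and its dual are pseudocomplemented *)
  (pseudocomplemented (@bu_le n k) (bu_bot k) /\
   pseudocomplemented (@bu_dual_le n k) (bu_top k)) /\
  (* (2) [L^B] ≅ [(L^B)^dual] ≅ 2^n *)
  (classes_iso_bool (@bu_le n k) (bu_bot k) n /\
   classes_iso_bool (@bu_dual_le n k) (bu_top k) n) /\
  (* (3) a^perp = b^perp iff a^* = b^* (pseudocomplements in L^B) *)
  (forall a b pa pb : blowup k,
     is_pcompl (@bu_le n k) (bu_bot k) a pa ->
     is_pcompl (@bu_le n k) (bu_bot k) b pb ->
     ((forall w, perp (@bu_le n k) (bu_bot k) a w <-> perp (@bu_le n k) (bu_bot k) b w)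
      <-> pa = pb)).
Proof.
split; [split|split; [split|]].
- by move=> x; exists (chain_top hk (~: base x)); apply: is_pcompl_chain_top.
- by move=> x; exists (chain_bot hk (~: base x)); apply: is_pcompl_dual_chain_bot.
- apply: (classes_iso_bool_of_subset (perp_subE hk)) => A.
  by exists (chain_bot hk A).
- apply: (classes_iso_bool_of_subset (perp_dual_subE hk)) => A.
  by exists (chain_bot hk (~: A)); rewrite /base /= setCK.
- exact: pcompl_eq_perp_equiv.
Qed.
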